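(* Let $\lambda$ and $\mu$ be infinite cardinals with $\mu\leq 2^\lambda$. Then $\mu\not\to_{hc}(\mu)^2_\lambda$: there is a coloring $c:[\mu]^2\to\lambda$ such that for no $\xi<\lambda$ and no $X\subseteq\mu$ with $|X|=\mu$ is the graph $(X,c^{-1}(\xi)\cap[X]^2)$ highly connected.
   Context: $[S]^2$ denotes the set of $2$-element subsets of $S$. A graph $G=(V,E)$ is highly connected if for every $D\subseteq V$ with $|D|<|V|$ the graph induced on $V\setminus D$ is connected. For cardinals $\nu,\mu,\lambda$, $\nu\to_{hc}(\mu)^2_\lambda$ means: for every $c:[\nu]^2\to\lambda$ there exist $\xi<\lambda$ and $X\subseteq\nu$ with $|X|=\mu$ such that $(X,c^{-1}(\xi)\cap[X]^2)$ is highly connected; $\not\to_{hc}$ is its negation. *)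

(* Cardinals are represented by types (up to equipotence). *)
From Stdlib Require Import Relations.

Definition injective_fn {A B : Type} (f : A -> B) : Prop :=
  forall x y, f x = f y -> x = y.

Definition card_le (A B : Type) : Prop := exists f : A -> B, injective_fn f.

Definition card_lt (A B : Type) : Prop := card_le A B /\ ~ card_le B A.

Definition equipotent (A B : Type) : Prop :=
  exists (f : A -> B) (g : B -> A),
    (forall a, g (f a) = a) /\ (forall b, f (g b) = b).

(* A is infinite (Dedekind / contains a copy of omega) *)
Definition infinite_type (A : Type) : Prop := card_le nat A.

Definition sub {V : Type} (S : V -> Prop) : Type := { v : V | S v }.

Definition connected (V : Type) (E : V -> V -> Prop) : Prop :=
  forall x y : V, clos_refl_trans V E x y.

Definition induced_edges {V : Type} (E : V -> V -> Prop) (S : V -> Prop)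
  : sub S -> sub S -> Prop :=
  fun a b => E (proj1_sig a) (proj1_sig b).

Definition highly_connected (V : Type) (E : V -> V -> Prop) : Prop :=
  forall D : V -> Prop,
    card_lt (sub D) V ->
    connected (sub (fun v => ~ D v)) (induced_edges E (fun v => ~ D v)).

Definition colour_graph {M L : Type} (c : M -> M -> L) (xi : L) (X : M -> Prop)
  : sub X -> sub X -> Prop :=
  fun a b => proj1_sig a <> proj1_sig b /\ c (proj1_sig a) (proj1_sig b) = xi.

(* Injectivity of f : M -> (L -> Prop) lets us separate any two points x < y of M
   by a coordinate l, and we colour {x, y} by the pair (l, f x l), read in L via
   L x 2 ~ L.  Then no path a < b < e is monochromatic, since both colours would
   record the same l and force f a l <-> f b l.  Now well-order M in type |M|.  In
   a colour class on X with |X| = |M| pick b with no edge of that colour going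
   upwards (the top of an edge, or any vertex if there is none); removing the
   fewer than |M| vertices below b isolates b, and some vertex above b remains. *)
From Stdlib Require Import Classical ClassicalEpsilon ProofIrrelevance
  FunctionalExtensionality PropExtensionality Relations Lia.
From mathcomp Require ssreflect ssrbool eqtype boolp wochoice.

Record strict_well_order {T : Type} (lt : T -> T -> Prop) : Prop := {
  wo_connex : forall x y, x <> y -> lt x y \/ lt y x;
  wo_minimal : forall P : T -> Prop, (exists x, P x) ->
    exists z, P z /\ forall x, P x -> ~ lt x z
}.

Section WellOrdering.
Import ssreflect ssrbool eqtype boolp wochoice.

Lemma exists_strict_well_order (T : Type) :
  exists lt : T -> T -> Prop, strict_well_order lt.
Proof.
have [R woR] := @well_ordering_principle {classic T}.
have chainR : wo_chain R predT := withinW woR.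
have antiR := wo_chain_antisymmetric chainR.
have totalR := wo_chainW chainR.
exists (fun x y => R x y /\ x <> y); split.
- move=> x y xy; have /orP[Rxy|Ryx] := totalR x y isT isT.
    by left.
  by right; split=> // yx; apply: xy.
- move=> P [x Px].
  have [|z [[/asboolP Pz zmin] _]] := woR [pred y | `[< P y >]].
    by exists x; apply/asboolP.
  exists z; split=> // y Py [Ryz yz]; apply: yz; apply: antiR => //.
  by rewrite Ryz zmin //; apply/asboolP.
Qed.

End WellOrdering.

Section StrictWellOrder.
Variables (T : Type) (lt : T -> T -> Prop).
Hypothesis lt_wo : strict_well_order lt.

Lemma wo_irrefl x : ~ lt x x.
Proof.
  destruct (wo_minimal lt lt_wo (fun u => u = x)) as [z [-> Hz]]; eauto.
Qed.

Lemma wo_asym x y : lt x y -> ~ lt y x.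
Proof.
  intros Hxy Hyx.
  destruct (wo_minimal lt lt_wo (fun u => u = x \/ u = y)) as [z [[-> | ->] Hz]];
    eauto.
  - apply (Hz y); auto.
  - apply (Hz x); auto.
Qed.

End StrictWellOrder.

Lemma strict_well_order_comap {T U : Type} (lt : U -> U -> Prop) (h : T -> U) :
  injective_fn h -> strict_well_order lt ->
  strict_well_order (fun x y => lt (h x) (h y)).
Proof.
  intros h_inj lt_wo; split.
  - intros x y Hxy. apply (wo_connex lt lt_wo).
    intros E. apply Hxy, h_inj, E.
  - intros P [x Px].
    destruct (wo_minimal lt lt_wo (fun u => exists x, P x /\ h x = u))
      as [u [[z [Pz <-]] Hz]]; [eauto|].
    exists z; split; [exact Pz|]. intros y Py. apply Hz. eauto.
Qed.

Lemma sub_val_inj {V : Type} (S : V -> Prop) : injective_fn (@proj1_sig V S).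
Proof.
  intros [a pa] [b pb]; simpl; intros <-. f_equal. apply proof_irrelevance.
Qed.

Lemma card_le_trans (A B C : Type) : card_le A B -> card_le B C -> card_le A C.
Proof.
  intros [f f_inj] [g g_inj]. exists (fun a => g (f a)).
  intros a b E. apply f_inj, g_inj, E.
Qed.

Lemma card_le_sub_of_inj {A V : Type} (Q : V -> Prop) (h : A -> V) :
  injective_fn h -> (forall a, Q (h a)) -> card_le A (sub Q).
Proof.
  intros h_inj hQ. exists (fun a => exist Q (h a) (hQ a)).
  intros a b E. apply h_inj. exact (f_equal (@proj1_sig _ _) E).
Qed.

Lemma injective_seq_from (T : Type) (p : T) :
  infinite_type T -> exists q : nat -> T, injective_fn q /\ q 0 = p.
Proof.
  intros [e e_inj].
  destruct (classic (exists k, e k = p)) as [[k <-] | Hp].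
  - exists (fun n => e (n + k)). split; [|reflexivity].
    intros n m E. apply e_inj in E. lia.
  - exists (fun n => match n with 0 => p | S n => e n end). split; [|reflexivity].
    intros [|n] [|m] E; try reflexivity;
      [exfalso; eauto | exfalso; eauto | f_equal; apply e_inj, E].
Qed.

(* Hilbert's hotel: shift the sequence [q] one step and fix everything else. *)
Lemma hilbert_hotel (T : Type) (q : nat -> T) :
  injective_fn q -> exists s : T -> T, injective_fn s /\ forall m, s m <> q 0.
Proof.
  intros q_inj.
  destruct (choice (fun m s_m => (exists n, q n = m /\ s_m = q (S n))
                                \/ ((forall n, q n <> m) /\ s_m = m)))
    as [s Hs].
  { intros m. destruct (classic (exists n, q n = m)) as [[n Hn] | Hm].
    - exists (q (S n)). eauto.
    - exists m. right. split; [|reflexivity]. intros n Hn. eauto. }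
  exists s; split.
  - intros a b E.
    destruct (Hs a) as [[n [<- Ha]] | [Ha Ea]], (Hs b) as [[n' [<- Hb]] | [Hb Eb]];
      rewrite ?Ha, ?Hb, ?Ea, ?Eb in E.
    + apply q_inj in E. congruence.
    + exfalso. apply (Hb (S n)), E.
    + exfalso. apply (Ha (S n')), eq_sym, E.
    + exact E.
  - intros m E. destruct (Hs m) as [[n [_ Hm]] | [Hm Em]].
    + rewrite Hm in E. apply q_inj in E. discriminate.
    + apply (Hm 0). congruence.
Qed.

Lemma card_le_remove_point (T : Type) (A : T -> Prop) (y : T) :
  infinite_type T -> card_le T (sub (fun x => A x \/ x = y)) -> card_le T (sub A).
Proof.
  intros T_inf [g g_inj].
  assert (Hp : exists p, forall m, proj1_sig (g m) = y -> m = p).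
  { destruct (classic (exists p, proj1_sig (g p) = y)) as [[p Hp] | Hn].
    - exists p. intros m Hm. apply g_inj, sub_val_inj. congruence.
    - destruct T_inf as [e _]. exists (e 0). intros m Hm. exfalso; eauto. }
  destruct Hp as [p Hp].
  destruct (injective_seq_from T p T_inf) as [q [q_inj q0]].
  destruct (hilbert_hotel T q q_inj) as [s [s_inj Hs]].
  apply (card_le_sub_of_inj A (fun m => proj1_sig (g (s m)))).
  - intros a b E. apply s_inj, g_inj, sub_val_inj, E.
  - intros m. destruct (proj2_sig (g (s m))) as [HA | Hy]; [exact HA|].
    exfalso. apply (Hs m). rewrite q0. exact (Hp _ Hy).
Qed.

(* A well-order of order type |T|, i.e. an initial ordinal. *)
Record initial_well_order {T : Type} (lt : T -> T -> Prop) : Prop := {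
  iwo_wo : strict_well_order lt;
  iwo_small : forall y, ~ card_le T (sub (fun x => lt x y))
}.

Lemma initial_well_order_comap {T : Type} (lt : T -> T -> Prop) (h : T -> T) :
  strict_well_order lt -> injective_fn h ->
  (forall y, ~ card_le T (sub (fun u => lt u (h y)))) ->
  initial_well_order (fun x y => lt (h x) (h y)).
Proof.
  intros lt_wo h_inj h_small; split.
  - exact (strict_well_order_comap lt h h_inj lt_wo).
  - intros y Hy. apply (h_small y), (card_le_trans _ _ _ Hy).
    apply (card_le_sub_of_inj _ (fun x : sub _ => h (proj1_sig x))).
    + intros a b E. apply sub_val_inj, h_inj, E.
    + intros x. exact (proj2_sig x).
Qed.

(* Transport a well-order along an embedding of [T] into its least initial segment
   of size |T|, if there is one. *)
Lemma exists_initial_well_order (T : Type) :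
  exists lt : T -> T -> Prop, initial_well_order lt.
Proof.
  destruct (exists_strict_well_order T) as [lt lt_wo].
  destruct (classic (exists v, card_le T (sub (fun x => lt x v)))) as [Hv | Hv].
  - destruct (wo_minimal lt lt_wo _ Hv) as [v [[h h_inj] v_min]].
    exists (fun x y => lt (proj1_sig (h x)) (proj1_sig (h y))).
    apply initial_well_order_comap; [exact lt_wo | |].
    + intros a b E. apply h_inj, sub_val_inj, E.
    + intros y Hy. exact (v_min _ Hy (proj2_sig (h y))).
  - exists (fun x y => lt x y).
    apply (initial_well_order_comap lt (fun x => x) lt_wo); [intros a b; auto|].
    intros y Hy. eauto.
Qed.

Section InitialWellOrder.
Variables (T : Type) (lt : T -> T -> Prop).
Hypotheses (T_inf : infinite_type T) (lt_iwo : initial_well_order lt).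

Lemma iwo_small_le y : ~ card_le T (sub (fun x => lt x y \/ x = y)).
Proof.
  intros Hy. exact (iwo_small lt lt_iwo y (card_le_remove_point T _ y T_inf Hy)).
Qed.

Lemma iwo_no_max y : exists z, lt y z.
Proof.
  apply NNPP. intros Hy. apply (iwo_small_le y).
  apply (card_le_sub_of_inj _ (fun x => x)); [intros a b; auto|].
  intros x. destruct (classic (x = y)) as [E | E]; [right; exact E|left].
  destruct (wo_connex lt (iwo_wo lt lt_iwo) x y E) as [H | H]; [exact H|].
  exfalso; eauto.
Qed.

End InitialWellOrder.

Section Successor.
Variables (T : Type) (lt : T -> T -> Prop) (s : T -> T).
Hypotheses (lt_wo : strict_well_order lt)
  (s_gt : forall y, lt y (s y)) (s_least : forall y w, lt y w -> ~ lt w (s y)).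

Lemma succ_inj : injective_fn s.
Proof.
  intros y y' E. apply NNPP. intros Hne.
  destruct (wo_connex lt lt_wo y y' Hne) as [H | H].
  - apply (s_least y y' H). rewrite E. apply s_gt.
  - apply (s_least y' y H). rewrite <- E. apply s_gt.
Qed.

Lemma succ_decomposition x :
  exists a n, (forall y, s y <> a) /\ x = Nat.iter n s a.
Proof.
  apply NNPP. intros Hx.
  destruct (wo_minimal lt lt_wo
              (fun x => ~ exists a n, (forall y, s y <> a) /\ x = Nat.iter n s a)
              (ex_intro _ x Hx)) as [x0 [Hx0 x0_min]].
  apply Hx0. destruct (classic (exists y, s y = x0)) as [[y <-] | Hl].
  - destruct (classic (exists a n, (forall y, s y <> a) /\ y = Nat.iter n s a))
      as [[a [n [Ha ->]]] | Hy].
    + exists a, (S n). auto.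
    + exfalso. exact (x0_min y Hy (s_gt y)).
  - exists x0, 0. split; [|reflexivity]. intros y E. eauto.
Qed.

Lemma succ_decomposition_unique n m a b :
  (forall y, s y <> a) -> (forall y, s y <> b) ->
  Nat.iter n s a = Nat.iter m s b -> n = m /\ a = b.
Proof.
  intros Ha Hb. revert m. induction n as [|n IH]; intros [|m] E; simpl in E.
  - auto.
  - exfalso. exact (Ha _ (eq_sym E)).
  - exfalso. exact (Hb _ E).
  - apply succ_inj in E. destruct (IH m E). auto.
Qed.

(* [(a + n, b)] is sent to [a + (2n + b)]. *)
Lemma succ_card_le_prod_bool : card_le (T * bool) T.
Proof.
  destruct (choice (fun (x : T) (p : T * nat) =>
                      (forall y, s y <> fst p) /\ x = Nat.iter (snd p) s (fst p)))
    as [dec Hdec].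
  { intros x. destruct (succ_decomposition x) as [a [n H]]. exists (a, n). exact H. }
  exists (fun '((x, b) : T * bool) =>
            Nat.iter (2 * snd (dec x) + (if b then 1 else 0)) s (fst (dec x))).
  intros [x b] [x' b'] E; simpl in E.
  destruct (Hdec x) as [Hl Hx], (Hdec x') as [Hl' Hx'].
  destruct (succ_decomposition_unique _ _ _ _ Hl Hl' E) as [En Ea].
  assert (snd (dec x) = snd (dec x') /\ b = b') as [Hn <-]
    by (destruct b, b'; split; lia).
  rewrite Hx, Hx', Hn, Ea. reflexivity.
Qed.

End Successor.

Lemma infinite_card_le_prod_bool (L : Type) : infinite_type L -> card_le (L * bool) L.
Proof.
  intros L_inf.
  destruct (exists_initial_well_order L) as [lt lt_iwo].
  pose proof (iwo_wo lt lt_iwo) as lt_wo.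
  destruct (choice (fun y z => lt y z /\ forall w, lt y w -> ~ lt w z)) as [s Hs].
  { intros y. apply (wo_minimal lt lt_wo (lt y)), (iwo_no_max L lt L_inf lt_iwo). }
  apply (succ_card_le_prod_bool L lt s lt_wo); intros y; apply Hs.
Qed.

Lemma not_connected_of_isolated (V : Type) (E : V -> V -> Prop) (v w : V) :
  (forall u, ~ E v u) -> v <> w -> ~ connected V E.
Proof.
  intros v_isolated vw E_conn.
  destruct (clos_rt_rt1n _ _ _ _ (E_conn v w)) as [|u u' Hvu _].
  - exact (vw eq_refl).
  - exact (v_isolated u Hvu).
Qed.

Definition truth (P : Prop) : bool :=
  if excluded_middle_informative P then true else false.

Lemma truth_inj (P Q : Prop) : truth P = truth Q -> (P <-> Q).
Proof.
  unfold truth.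
  destruct (excluded_middle_informative P), (excluded_middle_informative Q);
    intros H; try discriminate; tauto.
Qed.

Lemma separating_coordinate (M L : Type) (f : M -> L -> Prop) (l0 : L) :
  injective_fn f ->
  exists d : M -> M -> L, forall x y, x <> y -> ~ (f x (d x y) <-> f y (d x y)).
Proof.
  intros f_inj.
  destruct (choice (fun (xy : M * M) l =>
                      fst xy <> snd xy -> ~ (f (fst xy) l <-> f (snd xy) l)))
    as [d Hd].
  { intros [x y]. simpl.
    destruct (classic (exists l, ~ (f x l <-> f y l))) as [[l Hl] | Hn]; [eauto|].
    exists l0. intros xy _. apply xy, f_inj.
    apply functional_extensionality. intros l. apply propositional_extensionality.
    apply NNPP. eauto. }
  exists (fun x y => d (x, y)). intros x y. exact (Hd (x, y)).
Qed.

Lemma symmetrize_along {M L : Type} (lt : M -> M -> Prop) (col : M -> M -> L) :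
  strict_well_order lt ->
  exists c : M -> M -> L, (forall x y, c x y = c y x) /\
    forall x y, lt x y -> c x y = col x y.
Proof.
  intros lt_wo.
  exists (fun x y => if excluded_middle_informative (lt x y) then col x y else col y x).
  split.
  - intros x y.
    destruct (excluded_middle_informative (lt x y)) as [Hxy | Hxy],
             (excluded_middle_informative (lt y x)) as [Hyx | Hyx]; try reflexivity.
    + exfalso. exact (wo_asym M lt lt_wo x y Hxy Hyx).
    + destruct (classic (x = y)) as [<- | Hne]; [reflexivity|].
      destruct (wo_connex lt lt_wo x y Hne); contradiction.
  - intros x y Hxy.
    destruct (excluded_middle_informative (lt x y)); [reflexivity | contradiction].
Qed.

Lemma exists_colouring_without_monochromatic_path (M L : Type) (lt : M -> M -> Prop) :
  strict_well_order lt -> infinite_type L -> card_le M (L -> Prop) ->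
  exists c : M -> M -> L, (forall x y, c x y = c y x) /\
    forall a b e, lt a b -> lt b e -> c a b <> c b e.
Proof.
  intros lt_wo L_inf [f f_inj].
  pose proof L_inf as [l0 _].
  destruct (separating_coordinate M L f (l0 0) f_inj) as [d Hd].
  destruct (infinite_card_le_prod_bool L L_inf) as [enc enc_inj].
  destruct (symmetrize_along lt (fun x y => enc (d x y, truth (f x (d x y)))) lt_wo)
    as [c [c_sym c_lt]].
  exists c. split; [exact c_sym|].
  intros a b e Hab Hbe E.
  rewrite (c_lt _ _ Hab), (c_lt _ _ Hbe) in E.
  apply enc_inj in E. injection E as Ed Et.
  apply (Hd a b).
  - intros <-. exact (wo_irrefl M lt lt_wo a Hab).
  - apply truth_inj. rewrite Et, Ed. reflexivity.
Qed.

Section ColourClasses.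
Variables (M L : Type) (lt : M -> M -> Prop) (c : M -> M -> L).
Hypotheses (M_inf : infinite_type M) (lt_iwo : initial_well_order lt)
  (c_no_path : forall a b e, lt a b -> lt b e -> c a b <> c b e).

Lemma exists_vertex_without_upward_edge (xi : L) (X : M -> Prop) :
  (exists x, X x) -> exists b, X b /\ forall e, X e -> lt b e -> c b e <> xi.
Proof.
  intros [x Xx].
  destruct (classic (exists a b, X a /\ X b /\ lt a b /\ c a b = xi))
    as [[a [b [_ [Xb [Hab Ec]]]]] | Hno].
  - exists b. split; [exact Xb|]. intros e _ Hbe E.
    apply (c_no_path a b e Hab Hbe). congruence.
  - exists x. split; [exact Xx|]. intros e Xe Hxe E. eauto 7.
Qed.

Lemma colour_class_not_highly_connected (xi : L) (X : M -> Prop) :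
  equipotent (sub X) M -> ~ highly_connected (sub X) (colour_graph c xi X).
Proof.
  intros [g [g' [_ Hg'g]]] X_hc.
  assert (M_le_X : card_le M (sub X)).
  { exists g'. intros a b E. rewrite <- (Hg'g a), <- (Hg'g b), E. reflexivity. }
  pose proof M_inf as [e0 _].
  destruct (exists_vertex_without_upward_edge xi X (ex_intro _ _ (proj2_sig (g' (e0 0)))))
    as [b [Xb b_top]].
  set (D := fun w : sub X => lt (proj1_sig w) b).
  assert (D_small : card_lt (sub D) (sub X)).
  { split.
    - exists (@proj1_sig _ D). apply sub_val_inj.
    - intros X_le_D. apply (iwo_small lt lt_iwo b).
      apply (card_le_trans _ _ _ (card_le_trans _ _ _ M_le_X X_le_D)).
      apply (card_le_sub_of_inj _ (fun w : sub D => proj1_sig (proj1_sig w))).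
      + intros u v E. apply sub_val_inj, sub_val_inj, E.
      + intros w. exact (proj2_sig w). }
  assert (Hw : exists w : sub X, ~ D w /\ proj1_sig w <> b).
  { apply NNPP. intros Hno. apply (iwo_small_le M lt M_inf lt_iwo b).
    apply (card_le_trans _ _ _ M_le_X).
    apply (card_le_sub_of_inj _ (@proj1_sig _ X)); [apply sub_val_inj|].
    intros w. destruct (classic (D w)) as [Dw | Dw]; [left; exact Dw | right].
    apply NNPP. eauto. }
  destruct Hw as [w [Dw wb]].
  apply (not_connected_of_isolated _
           (induced_edges (colour_graph c xi X) (fun v => ~ D v))
           (exist (fun v => ~ D v) (exist X b Xb) (wo_irrefl M lt (iwo_wo lt lt_iwo) b))
           (exist (fun v => ~ D v) w Dw)).
  - intros [[e Xe] De] [Hbe Ec]; simpl in *.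
    destruct (wo_connex lt (iwo_wo lt lt_iwo) b e Hbe) as [H | H]; [|contradiction].
    exact (b_top e Xe H Ec).
  - intros E. apply wb. exact (eq_sym (f_equal (fun u => proj1_sig (proj1_sig u)) E)).
  - exact (X_hc D D_small).
Qed.

End ColourClasses.

Theorem mainTheorem4 (L M : Type) :
  infinite_type L -> infinite_type M ->
  card_le M (L -> Prop) ->
  exists c : M -> M -> L,
    (forall x y : M, c x y = c y x) /\
    forall (xi : L) (X : M -> Prop),
      equipotent (sub X) M ->
      ~ highly_connected (sub X) (colour_graph c xi X).
Proof.
  intros L_inf M_inf M_le.
  destruct (exists_initial_well_order M) as [lt lt_iwo].
  destruct (exists_colouring_without_monochromatic_path M L lt (iwo_wo lt lt_iwo)
              L_inf M_le)
    as [c [c_sym c_no_path]].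
  exists c. split; [exact c_sym|].
  exact (colour_class_not_highly_connected M L lt c M_inf lt_iwo c_no_path).
Qed.
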